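(* Let $\theta^{(1)},\ldots,\theta^{(M)}\in\mathbb{R}^D$ be an ensemble with empirical mean $\hat m=\frac1M\sum_i\theta^{(i)}$ and invertible empirical covariance $\hat\Sigma=\frac{1}{M-1}\sum_i(\theta^{(i)}-\hat m)(\theta^{(i)}-\hat m)^{\rm T}$, and let $\epsilon>0$. Define $$g_\epsilon(\theta,\theta')=\exp\Big(-\tfrac{1}{4\epsilon}(\theta-\theta')^{\rm T}\hat\Sigma^{-1}(\theta-\theta')\Big),\qquad k_\epsilon(\theta,\theta')=\frac{g_\epsilon(\theta,\theta')}{\sqrt{\sum_{i}g_\epsilon(\theta,\theta^{(i)})}\sqrt{\sum_i g_\epsilon(\theta',\theta^{(i)})}},$$ $n_\epsilon(\theta)=\sum_{i=1}^M k_\epsilon(\theta,\theta^{(i)})$, and the $M\times M$ Markov matrix ${\rm T}_{ij}=k_\epsilon(\theta^{(i)},\theta^{(j)})/n_\epsilon(\theta^{(i)})$. Let $\Psi_{\rm data}:\mathbb{R}^D\to\mathbb{R}$, let $\Delta\Psi^{(j)}_{\rm data}=\Psi_{\rm data}(\theta^{(j)})-\frac1M\sum_{k=1}^M\Psi_{\rm data}(\theta^{(k)})$, let $\tilde{\rm V}\in\mathbb{R}^M$ solve $\tilde{\rm V}={\rm T}\tilde{\rm V}+\epsilon\,\Delta\Psi_{\rm data}$, set $r_j=\tilde{\rm V}^{(j)}+\epsilon\,\Delta\Psi^{(j)}_{\rm data}$, and define $$\tilde V(\theta)=\frac{1}{n_\epsilon(\theta)}\sum_{j=1}^M k_\epsilon(\theta,\theta^{(j)})\,r_j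 .$$ Then for each $i=1,\ldots,M$, $$\hat\Sigma\,\nabla_\theta\tilde V(\theta^{(i)})=\sum_{j=1}^M s_{ij}\,\theta^{(j)},\qquad s_{ij}=\frac{1}{2\epsilon}{\rm T}_{ij}\Big(r_j-\sum_{k=1}^M{\rm T}_{ik}r_k\Big).$$ *)

From HB Require Import structures.
From mathcomp Require Import all_boot all_order all_algebra.
From mathcomp Require Import all_classical all_reals all_analysis.
Set Implicit Arguments. Unset Strict Implicit. Unset Printing Implicit Defensive.
Import Order.TTheory GRing.Theory Num.Theory.
Import numFieldNormedType.Exports.
Local Open Scope ring_scope.

Section Kernel.
Variables (R : realType) (M D : nat) (th : 'I_M -> 'rV[R]_D).

Definition emp_mean : 'rV[R]_D := (M%:R)^-1 *: \sum_(i < M) th i.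

(* empirical covariance  1/(M-1) sum_i (th_i - m)(th_i - m)^T  (a D x D matrix;
   with row vectors, (th_i - m)^T *m (th_i - m) is the outer product) *)
Definition emp_cov : 'M[R]_D :=
  ((M - 1)%:R)^-1 *: \sum_(i < M) ((th i - emp_mean)^T *m (th i - emp_mean)).

Variable eps : R.

Definition mahal (x y : 'rV[R]_D) : R :=
  ((x - y) *m invmx emp_cov *m (x - y)^T) 0 0.

Definition g_eps (x y : 'rV[R]_D) : R := expR (- ((4 * eps)^-1 * mahal x y)).

Definition k_eps (x y : 'rV[R]_D) : R :=
  g_eps x y / (Num.sqrt (\sum_(i < M) g_eps x (th i)) *
               Num.sqrt (\sum_(i < M) g_eps y (th i))).

Definition n_eps (x : 'rV[R]_D) : R := \sum_(i < M) k_eps x (th i).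

Definition Tmat (i j : 'I_M) : R := k_eps (th i) (th j) / n_eps (th i).

Definition dPsi (Psi : 'rV[R]_D -> R) (j : 'I_M) : R :=
  Psi (th j) - (M%:R)^-1 * \sum_(k < M) Psi (th k).

Definition Vtilde (r : 'I_M -> R) (x : 'rV[R]_D) : R :=
  (n_eps x)^-1 * \sum_(j < M) k_eps x (th j) * r j.

Definition s_coef (r : 'I_M -> R) (i j : 'I_M) : R :=
  (2 * eps)^-1 * Tmat i j * (r j - \sum_(k < M) Tmat i k * r k).

End Kernel.

Definition gradient (R : realType) (D : nat) (f : 'rV[R]_D -> R) (x : 'rV[R]_D)
  : 'rV[R]_D := \row_(k < D) ('D_(delta_mx 0 k) f x).

From HB Require Import structures.
From mathcomp Require Import all_boot all_order all_algebra.
From mathcomp Require Import all_classical all_reals all_analysis.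
From mathcomp Require Import ring.
Set Implicit Arguments. Unset Strict Implicit. Unset Printing Implicit Defensive.
Import Order.TTheory GRing.Theory Num.Theory.
Import numFieldNormedType.Exports.
Local Open Scope ring_scope.

(* The factor [1 / sqrt (sum_i g(x, th_i))] of [k(x, th_j)] does not depend on
   [j], so it cancels in [Vtilde]: the interpolant is the average of the [r_j]
   with Gibbs weights [c_j exp(phi_j x)], where
   [phi_j x = -(x - th_j)^T Sigma^-1 (x - th_j) / (4 eps)] and
   [c_j = 1 / sqrt (sum_i g(th_j, th_i))].  The derivative of such an average
   is [sum_j p_j (r_j - V) Dphi_j] with [p_j] the normalised weights, and
   [Sigma grad phi_j = -(x - th_j) / (2 eps)].  At [x = th_i] the normalised
   weights are the row [T_i.], and the [x]-terms cancel because
   [sum_j p_j (r_j - V) = 0]. *)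

Lemma psumr_ord_gt0 (R : numDomainType) n (j0 : 'I_n) (F : 'I_n -> R) :
  (forall j, 0 < F j) -> 0 < \sum_(j < n) F j.
Proof.
move=> F_gt0; rewrite (bigD1 j0) //=; apply: (lt_le_trans (F_gt0 j0)).
by rewrite lerDl sumr_ge0 // => j _; apply/ltW.
Qed.

Section PointwiseDerive.
Variables (R : realType) (V : normedModType R).
Implicit Types (f g : V -> R) (x v : V).

Lemma is_derive_mulr f g x v df dg : is_derive x v f df -> is_derive x v g dg ->
  is_derive x v (fun y => f y * g y) (f x * dg + g x * df).
Proof. by move=> f_df g_dg; exact: is_deriveM f_df g_dg. Qed.

Lemma is_derive_sumr n (F : 'I_n -> V -> R) x v dF :
  (forall i, is_derive x v (F i) (dF i)) ->
  is_derive x v (fun y => \sum_(i < n) F i y) (\sum_(i < n) dF i).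
Proof. by move=> F_dF; rewrite -fct_sumE; exact: is_derive_sum. Qed.

Lemma is_derive_invr f x v df : f x != 0 -> is_derive x v f df ->
  is_derive x v (fun y => (f y)^-1) (- (f x) ^- 2 * df).
Proof.
move=> fx_neq0 f_df; apply: DeriveDef; first exact: derivableV.
by rewrite deriveV // derive_val.
Qed.

Lemma is_derive_expR_comp f x v df : differentiable f x -> is_derive x v f df ->
  is_derive x v (fun y => expR (f y)) (expR (f x) * df).
Proof.
move=> f_diff f_df.
have expR_diff : differentiable expR (f x).
  exact/derivable1_diffP/derivable_expR.
have comp_diff : differentiable (expR \o f) x := differentiable_comp f_diff expR_diff.
apply: DeriveDef; first exact: diff_derivable.
rewrite (deriveE _ comp_diff) (diff_comp f_diff expR_diff) /= diff1E // derive1E.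
have -> : 'D_1 expR (f x) = expR (f x) :> R by exact: derive_val.
by rewrite -deriveE // derive_val mulrC.
Qed.

Lemma differentiable_sumr n (F : 'I_n -> V -> R) x :
  (forall i, differentiable (F i) x) ->
  differentiable (fun y => \sum_(i < n) F i y) x.
Proof. by move=> F_diff; rewrite -fct_sumE; exact: differentiable_sum. Qed.

End PointwiseDerive.

Section GibbsAverage.
Variables (R : realType) (V : normedModType R) (n : nat).
Variables (c : 'I_n -> R) (phi : 'I_n -> V -> R) (r : 'I_n -> R).

Definition gibbs_weight (j : 'I_n) (y : V) : R := c j * expR (phi j y).

Definition gibbs_mass (y : V) : R := \sum_(j < n) gibbs_weight j y.

Definition gibbs_avg (y : V) : R :=
  (\sum_(j < n) gibbs_weight j y * r j) / gibbs_mass y.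

Lemma gibbs_mass_gt0 (j0 : 'I_n) y : (forall j, 0 < c j) -> 0 < gibbs_mass y.
Proof.
by move=> c_gt0; apply: (psumr_ord_gt0 j0) => j; rewrite mulr_gt0 ?expR_gt0.
Qed.

Lemma gibbs_avgE y :
  gibbs_avg y = \sum_(j < n) gibbs_weight j y / gibbs_mass y * r j.
Proof. by rewrite /gibbs_avg mulr_suml; apply: eq_bigr => j _; rewrite mulrAC. Qed.

Lemma sum_gibbs_deviation y : gibbs_mass y != 0 ->
  \sum_(j < n) gibbs_weight j y / gibbs_mass y * (r j - gibbs_avg y) = 0.
Proof.
move=> mass_neq0; under eq_bigr do rewrite mulrBr.
by rewrite sumrB -mulr_suml -gibbs_avgE -mulr_suml divff // mul1r subrr.
Qed.

Variable x : V.
Hypotheses (phi_diff : forall j, differentiable (phi j) x)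
           (mass_neq0 : gibbs_mass x != 0).

Lemma differentiable_gibbs_weight j : differentiable (gibbs_weight j) x.
Proof.
apply: differentiableM; first exact: differentiable_cst.
apply: differentiable_comp (phi_diff j) _.
exact/derivable1_diffP/derivable_expR.
Qed.

Lemma differentiable_gibbs_avg : differentiable gibbs_avg x.
Proof.
apply: differentiableM.
  apply: differentiable_sumr => j.
  exact: differentiableM (differentiable_gibbs_weight j) (differentiable_cst _ _).
apply: differentiableV mass_neq0.
exact: differentiable_sumr differentiable_gibbs_weight.
Qed.

Lemma is_derive_gibbs_avg v dphi : (forall j, is_derive x v (phi j) (dphi j)) ->
  is_derive x v gibbs_avg
    (\sum_(j < n) gibbs_weight j x / gibbs_mass x * (r j - gibbs_avg x) * dphi j).
Proof.
move=> phi_dphi.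
have weight_der j : is_derive x v (gibbs_weight j) (gibbs_weight j x * dphi j).
  rewrite /gibbs_weight; apply: is_derive_eq.
    exact: is_derive_mulr (is_derive_cst _ _ _)
                          (is_derive_expR_comp (phi_diff j) (phi_dphi j)).
  by rewrite mulr0 addr0 mulrA.
rewrite {1}/gibbs_avg; apply: is_derive_eq.
  apply: is_derive_mulr (is_derive_invr mass_neq0 (is_derive_sumr weight_der)).
  exact: is_derive_sumr (fun j => is_derive_mulr (weight_der j) (is_derive_cst _ _ _)).
rewrite !mulr_sumr -big_split /=; apply: eq_bigr => j _.
rewrite /gibbs_avg mulr0 add0r.
by field.
Qed.

End GibbsAverage.

Section QuadraticForm.
Variables (R : realType) (D : nat).
Implicit Types (A : 'M[R]_D) (x v y : 'rV[R]_D).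

Lemma is_derive_coord x v a : is_derive x v (fun y => y 0 a) (v 0 a).
Proof.
apply: DeriveDef.
  exact: ((derivable_mxP (@id 'rV[R]_D) x v).1 (@derivable_id _ _ x v) 0 a).
have := derive_mx (@derivable_id _ _ x v); rewrite derive_id => /matrixP /(_ 0 a).
by rewrite mxE => <-.
Qed.

Lemma quadform_sum A y x : ((x - y) *m A *m (x - y)^T) 0 0 =
  \sum_(b < D) (\sum_(a < D) (x 0 a - y 0 a) * A a b) * (x 0 b - y 0 b).
Proof.
rewrite mxE; apply: eq_bigr => b _; rewrite !mxE; congr (_ * _).
by apply: eq_bigr => a _; rewrite !mxE.
Qed.

Lemma differentiable_quadform A y x :
  differentiable (fun z => ((z - y) *m A *m (z - y)^T) 0 0) x.
Proof.
rewrite (funext (quadform_sum A y)).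
have coord_diff b : differentiable (fun z : 'rV[R]_D => z 0 b - y 0 b) x.
  exact: differentiableB (differentiable_coord _ _ _) (differentiable_cst _ _).
apply: differentiable_sumr => b; apply: differentiableM (coord_diff b).
apply: differentiable_sumr => a.
exact: differentiableM (coord_diff a) (differentiable_cst _ _).
Qed.

Lemma is_derive_quadform A y x v :
  is_derive x v (fun z => ((z - y) *m A *m (z - y)^T) 0 0)
    ((v *m A *m (x - y)^T + (x - y) *m A *m v^T) 0 0).
Proof.
rewrite (funext (quadform_sum A y)).
have coord_der b : is_derive x v (fun z : 'rV[R]_D => z 0 b - y 0 b) (v 0 b - 0).
  exact: is_deriveB (is_derive_coord x v b) (is_derive_cst _ _ _).
apply: is_derive_eq.
  apply: is_derive_sumr => b; apply: is_derive_mulr _ (coord_der b).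
  exact: is_derive_sumr (fun a => is_derive_mulr (coord_der a) (is_derive_cst _ _ _)).
rewrite !mxE -big_split /=; apply: eq_bigr => b _.
rewrite addrC !mxE subr0; congr (_ + _).
  by congr (_ * _); apply: eq_bigr => a _; rewrite !mxE.
rewrite mulrC; congr (_ * _).
by apply: eq_bigr => a _; rewrite mulr0 add0r subr0 mulrC.
Qed.

Lemma is_derive_quadform_sym A y x v : A^T = A ->
  is_derive x v (fun z => ((z - y) *m A *m (z - y)^T) 0 0)
    (2 * ((x - y) *m A *m v^T) 0 0).
Proof.
move=> A_sym; apply: is_derive_eq; first exact: is_derive_quadform.
have swap : (v *m A *m (x - y)^T) 0 0 = ((x - y) *m A *m v^T) 0 0.
  transitivity ((v *m A *m (x - y)^T)^T 0 0); first by rewrite [RHS]mxE.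
  by rewrite !trmx_mul trmxK A_sym mulmxA.
by rewrite mxE swap mulr_natl mulr2n.
Qed.

End QuadraticForm.

Lemma gradient_eq (R : realType) (D : nat) (f : 'rV[R]_D -> R) (x u : 'rV[R]_D) :
  (forall v, is_derive x v f ((u *m v^T) 0 0)) -> gradient f x = u.
Proof.
move=> f_der; apply/rowP => k.
rewrite mxE (@derive_val _ _ _ _ _ _ _ (f_der _)).
by rewrite trmx_delta -colE mxE.
Qed.

Section EnsembleKernel.
Variables (R : realType) (M D : nat) (th : 'I_M -> 'rV[R]_D) (eps : R).

Lemma emp_cov_sym : (emp_cov th)^T = emp_cov th.
Proof.
rewrite /emp_cov linearZ /= raddf_sum; congr (_ *: _); apply: eq_bigr => j _.
by rewrite /= trmx_mul trmxK.
Qed.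

Definition gauss_exponent (j : 'I_M) (x : 'rV[R]_D) : R :=
  - ((4 * eps)^-1 * mahal th x (th j)).

Definition kernel_scale (y : 'rV[R]_D) : R :=
  (Num.sqrt (\sum_(i < M) g_eps th eps y (th i)))^-1.

Local Notation weight := (gibbs_weight (kernel_scale \o th) gauss_exponent).
Local Notation mass := (gibbs_mass (kernel_scale \o th) gauss_exponent).

Lemma k_eps_gibbs x j : k_eps th eps x (th j) = kernel_scale x * weight j x.
Proof. by rewrite /k_eps invfM mulrC -mulrA. Qed.

Lemma kernel_scale_gt0 (i0 : 'I_M) y : 0 < kernel_scale y.
Proof.
rewrite invr_gt0 sqrtr_gt0; apply: (psumr_ord_gt0 i0) => i.
exact: expR_gt0.
Qed.

Lemma gibbs_mass_kernel_gt0 (i0 : 'I_M) x : 0 < mass x.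
Proof. exact: gibbs_mass_gt0 i0 x (fun j => kernel_scale_gt0 i0 (th j)). Qed.

Lemma k_eps_div_n_eps (i0 : 'I_M) x j :
  k_eps th eps x (th j) / n_eps th eps x = weight j x / mass x.
Proof.
rewrite /n_eps; under eq_bigr do rewrite k_eps_gibbs.
rewrite k_eps_gibbs -mulr_sumr invfM mulrACA divff ?mul1r //.
by rewrite gt_eqF // (kernel_scale_gt0 i0).
Qed.

Lemma Vtilde_gibbs_avg (i0 : 'I_M) r :
  Vtilde th eps r = gibbs_avg (kernel_scale \o th) gauss_exponent r.
Proof.
apply/funext => x; rewrite gibbs_avgE /Vtilde mulr_sumr; apply: eq_bigr => j _.
by rewrite mulrA [_^-1 * _]mulrC (k_eps_div_n_eps i0).
Qed.

Lemma Tmat_gibbs i j : Tmat th eps i j = weight j (th i) / mass (th i).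
Proof. exact: (k_eps_div_n_eps i). Qed.

Lemma differentiable_gauss_exponent j x : differentiable (gauss_exponent j) x.
Proof.
apply: differentiableN; apply: differentiableM; first exact: differentiable_cst.
exact: differentiable_quadform.
Qed.

Lemma is_derive_gauss_exponent j x v :
  is_derive x v (gauss_exponent j)
    (- (2 * eps)^-1 * ((x - th j) *m invmx (emp_cov th) *m v^T) 0 0).
Proof.
have inv_sym : (invmx (emp_cov th))^T = invmx (emp_cov th).
  by rewrite trmx_inv emp_cov_sym.
apply: is_derive_eq.
  apply: is_deriveN; apply: is_derive_mulr (is_derive_cst (4 * eps)^-1 x v) _.
  exact: is_derive_quadform_sym.
rewrite mulr0 addr0 mulrA -mulNr; congr (- _ * _).
rewrite /= (_ : 4 * eps = 2 * (2 * eps)); last by ring.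
by rewrite invfM mulrAC mulVf ?mul1r // pnatr_eq0.
Qed.

Local Notation avg := (gibbs_avg (kernel_scale \o th) gauss_exponent).

Lemma gradient_Vtilde (i0 : 'I_M) r x :
  gradient (Vtilde th eps r) x =
  \sum_(j < M) (- (2 * eps)^-1 * (weight j x / mass x * (r j - avg r x)))
                 *: ((x - th j) *m invmx (emp_cov th)).
Proof.
rewrite (Vtilde_gibbs_avg i0); apply: gradient_eq => v; apply: is_derive_eq.
  apply: (is_derive_gibbs_avg r (fun j => differentiable_gauss_exponent j x)).
    exact: lt0r_neq0 (gibbs_mass_kernel_gt0 i0 x).
  by move=> j; apply: is_derive_gauss_exponent.
rewrite mulmx_suml summxE; apply: eq_bigr => j _.
by rewrite -scalemxAl [RHS]mxE mulrCA mulrA.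
Qed.

Lemma cov_gradient_Vtilde (i0 : 'I_M) r x : emp_cov th \in unitmx ->
  (emp_cov th *m (gradient (Vtilde th eps r) x)^T)^T =
  \sum_(j < M) ((2 * eps)^-1 * (weight j x / mass x * (r j - avg r x))) *: th j.
Proof.
move=> cov_unit.
rewrite trmx_mul trmxK emp_cov_sym (gradient_Vtilde i0) mulmx_suml.
under eq_bigr do rewrite -scalemxAl -mulmxA mulVmx // mulmx1 scalerBr.
rewrite sumrB -scaler_suml -mulr_sumr.
rewrite sum_gibbs_deviation ?lt0r_neq0 ?(gibbs_mass_kernel_gt0 i0) //.
rewrite mulr0 scale0r sub0r -sumrN; apply: eq_bigr => j _.
by rewrite -scaleNr mulNr opprK.
Qed.

End EnsembleKernel.

Theorem mainTheorem2 (R : realType) (M D : nat) (th : 'I_M -> 'rV[R]_D)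
  (eps : R) (Psi : 'rV[R]_D -> R) (Vt : 'I_M -> R) :
  emp_cov th \in unitmx ->
  0 < eps ->
  (forall i : 'I_M,
     Vt i = \sum_(j < M) Tmat th eps i j * Vt j + eps * dPsi th Psi i) ->
  let r := fun j : 'I_M => Vt j + eps * dPsi th Psi j in
  forall i : 'I_M,
    differentiable (Vtilde th eps r) (th i) /\
    (emp_cov th *m (gradient (Vtilde th eps r) (th i))^T)^T
      = \sum_(j < M) s_coef th eps r i j *: th j.
Proof.
move=> cov_unit _ _ r i; split.
  rewrite (Vtilde_gibbs_avg th eps i); apply: differentiable_gibbs_avg.
    by move=> j; apply: differentiable_gauss_exponent.
  exact: lt0r_neq0 (gibbs_mass_kernel_gt0 th eps i (th i)).
rewrite (cov_gradient_Vtilde eps i r (th i) cov_unit); apply: eq_bigr => j _.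
rewrite /s_coef gibbs_avgE; under [in RHS]eq_bigr do rewrite Tmat_gibbs.
by rewrite Tmat_gibbs mulrA.
Qed.
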